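(* Let $L\ge2$ be an integer and $r\in[0,\frac{L}{L+1})$. There exists an integer $n(r,L)$ such that for every prime power $q$ and every $n\ge n(r,L)$ with $rn\in\mathbb{N}$, every linear $[n,k]_q$ code that is $(r,L)$ list-decodable satisfies $k\le n-\lceil\frac{L+1}{L}rn\rceil$.
   Context: A linear $[n,k]_q$ code is a $k$-dimensional subspace of $\mathbb{F}_q^n$. $B_t(v)$ is the Hamming ball of radius $t$ around $v$. A code $C$ is $(r,L)$ list-decodable if $|B_{rn}(v)\cap C|\le L$ for every $v\in\mathbb{F}_q^n$. *)

From HB Require Import structures.
From mathcomp Require Import all_boot all_order all_algebra all_field.
From mathcomp Require Import reals.
Set Implicit Arguments. Unset Strict Implicit. Unset Printing Implicit Defensive.
Import Order.TTheory GRing.Theory Num.Theory.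

Definition hamming (F : finFieldType) (n : nat) (u v : 'rV[F]_n) : nat :=
  #|[set i : 'I_n | u ord0 i != v ord0 i]|.

Definition hball (F : finFieldType) (n : nat) (t : nat) (v : 'rV[F]_n)
  : {set 'rV[F]_n} := [set w | hamming v w <= t].

(* A linear code C (subspace of F^n) is list-decodable with radius t (= r n)
   and list size L: every Hamming ball of radius t contains at most L codewords. *)
Definition list_decodable (F : finFieldType) (n : nat) (C : {vspace 'rV[F]_n})
  (t L : nat) : Prop :=
  forall v : 'rV[F]_n, #|[set c in hball t v | c \in C]| <= L.

From HB Require Import structures.
From mathcomp Require Import all_boot all_order all_algebra all_field.
From mathcomp Require Import zify.
From mathcomp Require Import reals lra.
Set Implicit Arguments. Unset Strict Implicit. Unset Printing Implicit Defensive.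
Import Order.TTheory GRing.Theory Num.Theory.
Local Open Scope ring_scope.

(** Put C in systematic form: a set J of at most n - k redundancy coordinates
    and codewords y_w (w outside J) equal to the unit vector e_w outside J.
    If L (n - k) < (L + 1) t and k >= 2L, there is a ball of radius t with
    L + 1 codewords. Either some p in J is nonzero in L of the y_w: rescale
    them to be 1 at p and add the codeword 0; label the other coordinates of
    J by these L + 1 codewords so that each codeword labels all but at most
    t - 1 of them, and take as centre the word that is 1 at p, 0 outside J and
    follows on each other coordinate the codeword labelling it. Or L of
    the y_w have weight at most t, and with 0 they lie in the ball around 0.
    Otherwise, double counting the nonzero entries of the y_w on J gives
    (L + 1) t <= (L - 1) |J|, a contradiction. Finally, for n large the case
    k < 2L satisfies the bound outright, because r < L / (L + 1). *)

Lemma dimv_add_line (K : fieldType) (vT : vectType K) (U : {vspace vT}) (v : vT) :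
  v \notin U -> \dim (U + <[v]>) = (\dim U).+1.
Proof.
move=> vU; have v0 : v != 0 by apply: contraNneq vU => ->; apply: mem0v.
rewrite dimv_disjoint_sum ?dim_vline ?v0 ?addn1 //.
apply/eqP; rewrite -subv0; apply/subvP => x /memv_capP [xU /vlineP [k xE]].
rewrite xE in xU *; have [->|k0] := eqVneq k 0; first by rewrite scale0r mem0v.
have : v \in U by rewrite -[v](scalerK k0); apply: memvZ.
by rewrite (negbTE vU).
Qed.

Section CoordinateSubspaces.
Variables (F : fieldType) (n : nat).
Implicit Types (J : {set 'I_n}) (C V : {vspace 'rV[F]_n}).

Definition coord_subspace J : {vspace 'rV[F]_n} := (\sum_(q in J) <['e_q]>)%VS.

Lemma dim_rV : \dim (fullv : {vspace 'rV[F]_n}) = n.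
Proof. by rewrite dimvf /dim /= mul1n. Qed.

Lemma mem_delta_coord_subspace J q : q \in J -> 'e_q \in coord_subspace J.
Proof. by move=> qJ; apply: subvP (memv_line _); apply: sumv_sup qJ _. Qed.

Lemma coord_subspace_entry_eq0 J u q : u \in coord_subspace J -> q \notin J -> u 0 q = 0.
Proof.
case/memv_sumP => v vJ -> qJ; rewrite summxE big1 // => p pJ.
have /vlineP [k ->] := vJ p pJ; rewrite !mxE.
by have [pq|] := eqVneq p q; [rewrite pq (negbTE qJ) in pJ | rewrite mulr0].
Qed.

Lemma coord_subspaceU1 J q :
  q \notin J -> coord_subspace (q |: J) = (<['e_q]> + coord_subspace J)%VS.
Proof. by move=> qJ; rewrite /coord_subspace big_setU1. Qed.

Lemma fullv_of_unit_rows V : (forall q, 'e_q \in V) -> V = fullv.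
Proof.
move=> eV; apply/eqP; rewrite eqEsubv subvf; apply/subvP => x _.
by rewrite [x]row_sum_delta; apply: memv_suml => q _; apply: memvZ.
Qed.

Lemma exists_information_set C :
  exists2 J : {set 'I_n}, (#|J| + \dim C <= n)%N & (C + coord_subspace J)%VS = fullv.
Proof.
pose indep (J : {set 'I_n}) := \dim (C + coord_subspace J) == (\dim C + #|J|)%N.
have indep0 : indep set0.
  by rewrite /indep /coord_subspace big_set0 addv0 cards0 addn0.
case: (arg_maxnP (fun J => #|J|) indep0) => J /eqP dimJ maxJ.
exists J; first by rewrite addnC -dimJ -[X in (_ <= X)%N]dim_rV dimvS ?subvf.
apply: fullv_of_unit_rows => q; apply: contraT => qCJ.
have qJ : q \notin J.
  by apply: contra qCJ => /mem_delta_coord_subspace; apply: subvP; apply: addvSr.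
have := maxJ (q |: J); rewrite /indep /= cardsU1 qJ add1n ltnn; apply.
by rewrite coord_subspaceU1 // (addvC <[_]>%VS) addvA dimv_add_line // dimJ addnS.
Qed.

Lemma exists_systematic_codewords C :
  exists2 J : {set 'I_n}, (#|J| + \dim C <= n)%N & forall w, exists2 c, c \in C &
    forall q, q \notin J -> c 0 q = (w == q)%:R.
Proof.
have [J dimJ CJ] := exists_information_set C; exists J => // w.
have : 'e_w \in (C + coord_subspace J)%VS by rewrite CJ memvf.
case/memv_addP => c cC [u uJ ew]; exists c => // q qJ.
by move/rowP/(_ q): ew; rewrite !mxE (coord_subspace_entry_eq0 uJ qJ) addr0 eq_sym => <-.
Qed.

End CoordinateSubspaces.

Lemma exists_inj_into (T : finType) (A : {set T}) m :
  (m <= #|A|)%N -> exists2 f : 'I_m -> T, injective f & forall j, f j \in A.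
Proof.
move=> mA; exists (fun j => enum_val (widen_ord mA j)) => [i j | j].
  by move/enum_val_inj/(congr1 val) => ij; apply: val_inj.
exact: enum_valP.
Qed.

Lemma card_sepID (T : finType) (A : {set T}) (P : pred T) :
  (#|[set x in A | P x]| + #|[set x in A | ~~ P x]|)%N = #|A|.
Proof.
rewrite -(cardsID [set x | P x] A).
by congr addn; apply: eq_card => x; rewrite !inE andbC.
Qed.

Lemma card_sep_sum (T : finType) (A : {set T}) (P : pred T) :
  #|[set x in A | P x]| = (\sum_(x in A) P x)%N.
Proof.
rewrite -sum1_card big_mkcond [RHS]big_mkcond; apply: eq_bigr => x _.
by rewrite inE; case: (x \in A); case: (P x).
Qed.

Lemma exists_labelling_large_fibres (T : finType) (I : eqType) (i0 : I)
    (l : seq I) (A : {set T}) (b : nat) :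
  (size l * b <= #|A|)%N ->
  exists s : T -> I, forall i, i \in l -> (b <= #|[set x in A | s x == i]|)%N.
Proof.
elim: l A => [|i l IH] A /= lA; first by exists (fun=> i0).
have [f f_inj fA] : exists2 f : 'I_b -> T, injective f & forall j, f j \in A.
  by apply: exists_inj_into; move: lA; rewrite mulSn; lia.
pose B := [set f j | j in 'I_b].
have BA : B \subset A by apply/subsetP => _ /imsetP [j _ ->].
have cardB : #|B| = b by rewrite card_imset // card_ord.
have [s sl] : exists s : T -> I,
    forall j, j \in l -> (b <= #|[set x in A :\: B | s x == j]|)%N.
  by apply: IH; rewrite cardsD (setIidPr BA) cardB; move: lA; rewrite mulSn; lia.
exists (fun x => if x \in B then i else s x) => j; rewrite inE => /predU1P [->|jl].
  rewrite -{1}cardB; apply/subset_leq_card/subsetP => x xB.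
  by rewrite inE (subsetP BA) // xB eqxx.
apply: leq_trans (sl j jl) _; apply/subset_leq_card/subsetP => x.
by rewrite !inE => /andP [/andP [/negbTE -> ->]].
Qed.

Lemma hamming_leq_card (F : finFieldType) n (u v : 'rV[F]_n) (S : {set 'I_n}) :
  (forall q, u 0 q != v 0 q -> q \in S) -> (hamming u v <= #|S|)%N.
Proof. by move=> uvS; apply/subset_leq_card/subsetP => q; rewrite inE; apply: uvS. Qed.

Section SystematicCodewords.
Variables (F : finFieldType) (n : nat) (C : {vspace 'rV[F]_n}) (J : {set 'I_n}).
Variable y : 'I_n -> 'rV[F]_n.
Hypothesis yC : forall w, y w \in C.
Hypothesis y_offJ : forall w q, q \notin J -> y w 0 q = (w == q)%:R.
Variables L t : nat.

Definition col_support p := [set w in ~: J | y w 0 p != 0].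

Definition redundancy_weight w := #|[set q in J | y w 0 q != 0]|.

Section ScaledFamily.
Variables (om : 'I_L -> 'I_n) (c : 'I_L -> F).
Hypotheses (om_inj : injective om) (omJ : forall j, om j \notin J).
Hypothesis c_neq0 : forall j, c j != 0.

Definition scaled_family (i : option 'I_L) : 'rV[F]_n :=
  if i is Some j then c j *: y (om j) else 0.

Lemma scaled_family_offJ j q :
  q \notin J -> scaled_family (Some j) 0 q = c j * (om j == q)%:R.
Proof. by move=> qJ; rewrite /= mxE y_offJ. Qed.

Lemma scaled_family_inj : injective scaled_family.
Proof.
have fam_om i j : (scaled_family i 0 (om j) != 0) = (i == Some j).
  case: i => [j'|]; last by rewrite mxE eqxx.
  rewrite scaled_family_offJ // (inj_eq om_inj) mulf_eq0 (negbTE (c_neq0 j')) /=.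
  have [->|ne] := eqVneq j' j; first by rewrite !eqxx oner_eq0.
  by rewrite mulr0n eqxx; apply/esym/eqP => -[jj]; rewrite jj eqxx in ne.
move=> i i' ii'; case: i' ii' => [j|] ii'; first by apply/eqP; rewrite -fam_om ii' fam_om.
by case: i ii' => [j|] // ii'; have := fam_om (Some j) j; rewrite ii' fam_om eqxx.
Qed.

Lemma scaled_family_ball_card v :
  (forall i, hamming v (scaled_family i) <= t)%N ->
  (L < #|[set x in hball t v | x \in C]|)%N.
Proof.
move=> near_v.
have <- : #|[set scaled_family i | i : option 'I_L]| = L.+1.
  by rewrite card_imset ?card_option ?card_ord //; apply: scaled_family_inj.
apply/subset_leq_card/subsetP => _ /imsetP [i _ ->]; rewrite /hball !inE near_v.
by case: i => [j|] /=; [apply/memvZ/yC | apply: mem0v].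
Qed.

End ScaledFamily.

Lemma heavy_column_ball p :
  p \in J -> (L <= #|col_support p|)%N ->
  (L * #|J| < L.+1 * t)%N ->
  exists v, (L < #|[set x in hball t v | x \in C]|)%N.
Proof.
move=> pJ /exists_inj_into [om om_inj omS] Jt.
have /all_and2 [omJ omp] : forall j, om j \notin J /\ y (om j) 0 p != 0.
  by move=> j; have := omS j; rewrite !inE => /andP [].
pose c j := (y (om j) 0 p)^-1.
have c_neq0 j : c j != 0 by rewrite invr_eq0.
pose A := J :\ p.
have cardJ : #|J| = #|A|.+1 by rewrite (cardsD1 p J) pJ.
have fibres : (size (enum {: option 'I_L}) * (#|A| - t.-1) <= #|A|)%N.
  by rewrite -cardE card_option card_ord; move: Jt; rewrite cardJ; nia.
have [sg sgA] := exists_labelling_large_fibres None fibres.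
pose v := \row_q if q \in A then scaled_family om c (sg q) 0 q else (q == p)%:R.
exists v; apply: (scaled_family_ball_card om_inj omJ c_neq0) => i.
pose e := if i is Some j then om j else p.
(* Off J only [om j] is nonzero in member [Some j]; at p only member [None] differs from 1. *)
apply: leq_trans (hamming_leq_card (S := e |: [set q in A | sg q != i]) _) _.
  move=> q; rewrite mxE !inE.
  have [->|qp] := eqVneq q p.
    by case: i @e => [j|] /=; rewrite ?mxE ?mulVf ?eqxx.
  have [qJ|qJ] /= := boolP (q \in J).
    by move=> ne; apply/orP; right; apply: contraNneq ne => ->.
  case: i @e => [j|] /=; last by rewrite mxE eqxx.
  by rewrite scaled_family_offJ // [q == _]eq_sym; case: (om j == q); rewrite ?mulr0 ?eqxx.
have t_gt0 : (0 < t)%N by case: t Jt; rewrite ?muln0.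
have := sgA i (mem_enum _ i); have := card_sepID A (fun q => sg q == i).
by rewrite cardsU1; have := leq_b1 (e \notin [set q in A | sg q != i]); lia.
Qed.

Lemma light_rows_ball :
  (L <= #|[set w in ~: J | redundancy_weight w < t]|)%N ->
  (L < #|[set x in hball t 0 | x \in C]|)%N.
Proof.
move=> /exists_inj_into [om om_inj omS].
have /all_and2 [omJ om_light] :
    forall j, om j \notin J /\ (redundancy_weight (om j) < t)%N.
  by move=> j; have := omS j; rewrite !inE => /andP [].
apply: (scaled_family_ball_card (c := fun=> 1) om_inj omJ (fun=> oner_neq0 F)).
case=> [j|] /=.
  apply: (@leq_trans #|om j |: [set q in J | y (om j) 0 q != 0]|).
    apply: hamming_leq_card => q; rewrite mxE scale1r eq_sym !inE.
    have [qJ|qJ] := boolP (q \in J); first by move=> ->; rewrite orbT.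
    by rewrite y_offJ // [q == _]eq_sym; case: (om j == q); rewrite ?mulr0n ?eqxx.
  rewrite cardsU1; have := om_light j; rewrite /redundancy_weight.
  by have := leq_b1 (om j \notin [set q in J | y (om j) 0 q != 0]); lia.
apply: (@leq_trans #|@set0 'I_n|); last by rewrite cards0.
by apply: hamming_leq_card => q; rewrite eqxx.
Qed.

Lemma heavy_column_or_light_rows :
  (2 * L <= #|~: J|)%N -> (L * #|J| < L.+1 * t)%N ->
  (exists2 p, p \in J & L <= #|col_support p|)%N \/
  (L <= #|[set w in ~: J | redundancy_weight w < t]|)%N.
Proof.
move=> JC Jt.
have [/exists_inP [p pJ heavy]|] := boolP [exists p in J, L <= #|col_support p|]%N.
  by left; exists p.
rewrite negb_exists_in => /forall_inP light_cols; right; rewrite leqNgt.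
apply/negP => few_light.
(* At most (L - 1) |J| < (L + 1) t nonzero entries on J in total, yet at
   least t in each of at least L + 1 rows. *)
have double_count :
    (\sum_(w in ~: J) redundancy_weight w = \sum_(q in J) #|col_support q|)%N.
  rewrite /redundancy_weight /col_support.
  under eq_bigr do rewrite card_sep_sum.
  under [RHS]eq_bigr do rewrite card_sep_sum.
  exact: exchange_big.
have cols_le : (\sum_(q in J) #|col_support q| <= #|J| * L.-1)%N.
  rewrite -sum_nat_const; apply: leq_sum => q qJ.
  by have := light_cols q qJ; rewrite -ltnNge; lia.
have rows_ge : (#|[set w in ~: J | ~~ (redundancy_weight w < t)]| * t <=
                \sum_(w in ~: J) redundancy_weight w)%N.
  rewrite card_sep_sum big_distrl /=; apply: leq_sum => w _.
  by case: ltnP; rewrite ?mul0n ?mul1n.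
have := card_sepID (~: J) (fun w => redundancy_weight w < t)%N.
nia.
Qed.

Lemma systematic_not_list_decodable :
  (2 * L <= #|~: J|)%N -> (L * #|J| < L.+1 * t)%N ->
  exists v, (L < #|[set x in hball t v | x \in C]|)%N.
Proof.
move=> JC Jt; case: (heavy_column_or_light_rows JC Jt) => [[p pJ heavy]|light].
  exact: heavy_column_ball heavy Jt.
by exists 0; apply: light_rows_ball.
Qed.

End SystematicCodewords.

Lemma list_decodable_dim_le (F : finFieldType) n (C : {vspace 'rV[F]_n}) t L :
  list_decodable C t L -> (2 * L <= \dim C)%N -> (L.+1 * t <= L * (n - \dim C))%N.
Proof.
move=> dec kL; rewrite leqNgt; apply/negP => small_codim.
have [J dimJ /fin_all_exists2 [y yC y_offJ]] := exists_systematic_codewords C.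
have JC : (2 * L <= #|~: J|)%N.
  have := cardsC J; rewrite card_ord => cardJC.
  by rewrite -(leq_add2l #|J|) cardJC (leq_trans _ dimJ) // leq_add2l.
have Jt : (L * #|J| < L.+1 * t)%N.
  apply: leq_ltn_trans small_codim; rewrite leq_mul2l.
  rewrite leq_subRL; last exact: leq_trans (leq_addl _ _) dimJ.
  by rewrite addnC dimJ orbT.
have [v] := systematic_not_list_decodable yC y_offJ JC Jt.
by rewrite ltnNge dec.
Qed.

Lemma ceil_bound_of_nat (R : realType) (L n k t : nat) :
  (0 < L)%N -> (k <= n)%N -> (L.+1 * t <= L * (n - k))%N ->
  k%:Z <= n%:Z - Num.ceil ((L.+1)%:R / L%:R * t%:R : R).
Proof.
move=> L0 kn Lt; rewrite lerBrDl -lerBrDr ceil_le_int subzn // pmulrn.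
rewrite mulrAC ler_pdivrMr ?ltr0n // mulrC -!natrM ler_nat.
by rewrite mulnC (mulnC (n - k)%N).
Qed.

Lemma eventually_rate_bound (R : realType) (L : nat) (r : R) :
  (0 < L)%N -> 0 <= r -> r < L%:R / (L.+1)%:R ->
  exists n0 : nat, forall n, (n0 <= n)%N ->
    (L.+1)%:R * (r * n%:R) <= L%:R * (n%:R - (2 * L)%:R).
Proof.
move=> L0 r0 rlt.
have lr0 : 0 < L%:R - L.+1%:R * r.
  by move: rlt; rewrite ltr_pdivlMr ?ltr0n // => h; lra.
pose c := 2 * L%:R ^+ 2 / (L%:R - L.+1%:R * r).
have c0 : 0 <= c by apply: divr_ge0 (ltW lr0); rewrite mulr_ge0 ?exprn_ge0 ?ler0n.
exists (Num.Def.archi_bound c) => n n0n.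
have : c < n%:R by apply: lt_le_trans (archi_boundP c0) _; rewrite ler_nat.
rewrite ltr_pdivrMr // natrM expr2 => lt_n.
by apply: ltW; lra.
Qed.

Unset Implicit Arguments.

Theorem proposition3p6 (R : realType) (L : nat) (r : R) :
  (2 <= L)%N -> 0 <= r -> r < L%:R / (L.+1)%:R ->
  exists n0 : nat,
    forall (F : finFieldType) (n t : nat),
      (n0 <= n)%N -> r * n%:R = t%:R ->
      forall C : {vspace 'rV[F]_n},
        list_decodable C t L ->
        (\dim C)%:Z <= n%:Z - Num.ceil ((L.+1)%:R / L%:R * t%:R : R).
Proof.
move=> L2 r0 rlt; have L0 : (0 < L)%N by apply: leq_trans L2.
have [n0 n0P] := eventually_rate_bound L0 r0 rlt.
exists n0 => F n t n0n rn C dec.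
have kn : (\dim C <= n)%N by rewrite -[X in (_ <= X)%N](dim_rV F n) dimvS ?subvf.
apply: ceil_bound_of_nat => //.
have [kL|Lk] := leqP (2 * L) (\dim C); first exact: list_decodable_dim_le.
rewrite -(ler_nat R) !natrM natrB // -rn; apply: le_trans (n0P n n0n) _.
by rewrite ler_wpM2l ?ler0n // lerB // ler_nat ltnW.
Qed.
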